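(* Consider the control-affine system $\dot{\boldsymbol{x}}=f(\boldsymbol{x})+g(\boldsymbol{x})\boldsymbol{u}$ with $\boldsymbol{x}\in\mathbb{R}^n$, $\boldsymbol{u}\in\mathbb{R}^q$, $f,g$ locally Lipschitz. Let $b:\mathbb{R}^n\to\mathbb{R}$ be an Auxiliary-Variable Adaptive Control Barrier Function (AVCBF) with minimum relative degree $\underline{m}$, built with $m_a\le \underline{m}$ positive auxiliary functions $\mathcal{A}_1,\dots,\mathcal{A}_{m_a}$, augmented state $\boldsymbol{Z}$, augmented input $\boldsymbol{V}$, functions $\psi_0,\dots,\psi_{m_a}$ and sets $\mathcal{C}_0,\dots,\mathcal{C}_{m_a-1}$ as described in the context. Suppose $\boldsymbol{Z}(0)\in \mathcal{C}_0\cap\dots\cap\mathcal{C}_{m_a-1}$. If there exists a Lipschitz controller $\boldsymbol{V}$ (taking values in $\mathcal{U}_{\boldsymbol{V}}(\boldsymbol{Z})$) that satisfies the AVCBF constraint $\psi_{m_a}(\boldsymbol{Z},\boldsymbol{V})\ge 0$ and also ensures $\boldsymbol{Z}(t)\in\mathcal{C}_{m_a-1}$ for all $t\ge 0$, then $\mathcal{C}_0\cap\dots\cap\mathcal{C}_{m_a-1}$ is forward invariant, i.e. $\boldsymbol{Z}(t)\in \mathcal{C}_0\cap\dots\cap\mathcal{C}_{m_a-1}$ for all $t\ge0$. Moreover, $b(\boldsymbol{x}(t))\ge 0$ for all $t\ge 0$.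
   Context: A class $\kappa$ function is a continuous, strictly increasing $\alpha:[0,a)\to[0,\infty]$ with $\alpha(0)=0$. Minimum relative degree $\underline{m}$ of $b$: the smallest number of differentiations of $b$ along $\dot{\boldsymbol{x}}=f+g\boldsymbol{u}$ after which at least one component of $\boldsymbol{u}$ appears explicitly. Auxiliary construction: fix an integer $1\le m_a\le\underline{m}$. For $i\in\{1,\dots,m_a\}$, let $a_i(t)$ be an auxiliary variable and $\boldsymbol{\pi}_i=(\pi_{i,1},\dots,\pi_{i,m_a+1-i})\in\mathbb{R}^{m_a+1-i}$ an auxiliary state with $\pi_{i,1}=a_i$, $\dot\pi_{i,j}=\pi_{i,j+1}$ for $j<m_a+1-i$, and $\dot\pi_{i,m_a+1-i}=\nu_i\in\mathbb{R}$ (an unbounded auxiliary input); write this as $\dot{\boldsymbol{\pi}}_i=F_i(\boldsymbol{\pi}_i)+G_i(\boldsymbol{\pi}_i)\nu_i$. The augmented systems are $\boldsymbol{z}_i=(\boldsymbol{x},\boldsymbol{\pi}_i)$, $\dot{\boldsymbol{z}}_i=\mathcal{F}_i(\boldsymbol{z}_i)+\mathcal{G}_i(\boldsymbol{z}_i)\boldsymbol{v}_i$ with $\mathcal{F}_i=(f,F_i)$, $\mathcal{G}_i=\mathrm{diag}(g,G_i)$, $\boldsymbol{v}_i=(\boldsymbol{u},\nu_i)$. Let $\boldsymbol{Z}=(\boldsymbol{z}_1,\dots,\boldsymbol{z}_{m_a})$ and $\boldsymbol{V}=(\boldsymbol{v}_1,\dots,\boldsymbol{v}_{m_a})$. Auxiliary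 functions $\mathcal{A}_i(\boldsymbol{x},a_i)$ are required to be positive; each is a HOCBF of relative degree $m_a+1-i$ for the $i$-th augmented system: with $\varphi_{i,0}=\mathcal{A}_i$, $\varphi_{i,j}=\dot\varphi_{i,j-1}+\alpha_{i,j}(\varphi_{i,j-1})$ ($j=1,\dots,m_a+1-i$, $\alpha_{i,j}$ sufficiently differentiable class $\kappa$ functions), sets $\mathcal{B}_{i,j}=\{\varphi_{i,j}>0\}$ for $j=0,\dots,m_a-i$, and the constraint $\varphi_{i,m_a+1-i}\ge\epsilon$ for a fixed constant $\epsilon>0$ being satisfiable on $\mathcal{B}_{i,0}\cap\dots\cap\mathcal{B}_{i,m_a-i}$. $\mathcal{U}_{\boldsymbol{V}}(\boldsymbol{Z})$ is the set of $\boldsymbol{V}$ with $\varphi_{i,m_a+1-i}\ge\epsilon$ for all $i=1,\dots,m_a$. AVCBF functions: $\psi_0(\boldsymbol{Z})=\mathcal{A}_1 b(\boldsymbol{x})$, $\psi_i(\boldsymbol{Z})=\mathcal{A}_{i+1}\big(\dot\psi_{i-1}(\boldsymbol{Z})+\alpha_i(\psi_{i-1}(\boldsymbol{Z}))\big)$ for $i=1,\dots,m_a-1$, and $\psi_{m_a}(\boldsymbol{Z},\boldsymbol{V})=\dot\psi_{m_a-1}(\boldsymbol{Z},\boldsymbol{V})+\alpha_{m_a}(\psi_{m_a-1}(\boldsymbol{Z}))$, where time derivatives are along the augmented dynamics, $\alpha_j$ ($j<m_a$) are $(m_a-j)$-times differentiable class $\kappa$ functions and $\alpha_{m_a}$ is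 class $\kappa$. Sets: $\mathcal{C}_i=\{\boldsymbol{Z}:\psi_i(\boldsymbol{Z})\ge0\}$, $i=0,\dots,m_a-1$. $b$ is an AVCBF if every $\mathcal{A}_i$ is such a HOCBF and $\sup_{\boldsymbol{V}\in\mathcal{U}_{\boldsymbol{V}}(\boldsymbol{Z})}\psi_{m_a}(\boldsymbol{Z},\boldsymbol{V})\ge0$ for all $\boldsymbol{Z}\in\mathcal{C}_0\cap\dots\cap\mathcal{C}_{m_a-1}$, with each $\mathcal{A}_i>0$. The inequality $\psi_{m_a}(\boldsymbol{Z},\boldsymbol{V})\ge 0$ is called the AVCBF constraint. *)

From mathcomp Require Import all_boot all_order all_algebra.
From mathcomp Require Import all_classical all_reals all_analysis.
Set Implicit Arguments. Unset Strict Implicit. Unset Printing Implicit Defensive.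
Import Order.TTheory GRing.Theory Num.Theory.
Import numFieldNormedType.Exports.
Local Open Scope ring_scope.

Definition ext_classK {R : realType} (al : R -> R) : Prop :=
  continuous al /\ (forall s s' : R, s < s' -> al s < al s') /\ al 0 = 0.

(* Indexing conventions (0-based):
   A k  = paper's auxiliary function A_{k+1}(x, a_{k+1}),  k < ma
   a k  = paper's auxiliary variable a_{k+1}(t),            k < ma
   alpha j = paper's class-kappa function alpha_j,          1 <= j <= ma
   avcbf_psi ... i t = psi_i(Z(t)) along the closed-loop trajectory, i < ma;
   the time derivative along the augmented dynamics is, along the trajectory,
   the derivative in t of t |-> psi_{i-1}(Z(t)). *)
Fixpoint avcbf_psi {R : realType} {n : nat} (b : 'cV[R]_n -> R)
    (A : nat -> 'cV[R]_n -> R -> R) (alpha : nat -> R -> R)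
    (x : R -> 'cV[R]_n) (a : nat -> R -> R) (i : nat) : R -> R :=
  match i with
  | 0%N => fun t => A 0%N (x t) (a 0%N t) * b (x t)
  | j.+1 => fun t => A j.+1 (x t) (a j.+1 t) *
        (derive1 (avcbf_psi b A alpha x a j) t
         + alpha j.+1 (avcbf_psi b A alpha x a j t))
  end.

Definition avcbf_psi_top {R : realType} {n : nat} (b : 'cV[R]_n -> R)
    (A : nat -> 'cV[R]_n -> R -> R) (alpha : nat -> R -> R)
    (x : R -> 'cV[R]_n) (a : nat -> R -> R) (ma : nat) (t : R) : R :=
  derive1 (avcbf_psi b A alpha x a ma.-1) t
  + alpha ma (avcbf_psi b A alpha x a ma.-1 t).

From mathcomp Require Import all_boot all_order all_algebra.
From mathcomp Require Import all_classical all_reals all_analysis.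
From mathcomp Require Import lra zify.
Import Order.TTheory GRing.Theory Num.Theory.
Import numFieldNormedType.Exports.
Local Open Scope classical_set_scope.
Local Open Scope ring_scope.

(* Since A_{i+1} > 0, psi_{i+1} >= 0 says exactly that psi_i satisfies the
   comparison inequality psi_i' + alpha_{i+1}(psi_i) >= 0.  A function that
   starts nonnegative and satisfies such an inequality stays nonnegative: if
   h(t1) < 0, the minimum of h on [0, t1] is attained at some c > 0 with
   h(c) < 0, and there the inequality forces h' > 0 just before c, so h was
   smaller there.  Descending from psi_{ma-1} >= 0 gives psi_i >= 0 for
   every i, and psi_0 = A_1 b >= 0 with A_1 > 0 gives b >= 0. *)

Lemma ext_classK_lt0 (R : realType) (al : R -> R) (s : R) :
  ext_classK al -> s < 0 -> al s < 0.
Proof. by move=> [_ [al_lt al0]] /al_lt; rewrite al0. Qed.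

Section Comparison.
Variables (R : realType) (h al : R -> R) (t0 : R).
Hypothesis al_lt0 : forall s, s < 0 -> al s < 0.
Hypothesis h_derivable : forall {t}, t0 <= t -> derivable h t 1.
Hypothesis h_comparison : forall {t}, t0 <= t -> 0 <= derive1 h t + al (h t).

Lemma derive1_gt0_of_lt0 t : t0 <= t -> h t < 0 -> 0 < derive1 h t.
Proof. by move=> t0t /al_lt0 al_neg; have := h_comparison t0t; lra. Qed.

Lemma h_within_continuous a c : t0 <= a -> {within `[a, c], continuous h}.
Proof.
move=> t0a; apply: derivable_within_continuous => z.
by rewrite in_itv /= => /andP[az _]; apply: h_derivable; apply: le_trans az.
Qed.

Lemma lt0_not_left_min c : t0 < c -> h c < 0 -> exists2 s, t0 <= s < c & h s < h c.
Proof.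
move=> t0c hc_lt0.
have hcc : h x @[x --> c] --> h c.
  by apply: differentiable_continuous; rewrite -derivable1_diffP; apply/h_derivable/ltW.
have /(_ _) /nbhs_ballP [d /= d_gt0 near_c] := @cvgr_lt _ _ _ _ h _ hcc _ hc_lt0.
pose e := Num.min d (c - t0) / 2.
have e_gt0 : 0 < e by rewrite divr_gt0 // lt_min d_gt0 subr_gt0.
have [e_d e_ct0] : e < d /\ e < c - t0.
  have : e < Num.min d (c - t0).
    by rewrite /e ltr_pdivrMr // mulr_natr mulr2n ltrDr lt_min d_gt0 subr_gt0.
  by rewrite lt_min => /andP[].
pose s := c - e.
have t0s : t0 <= s by rewrite /s; lra.
have sc : s < c by rewrite /s; lra.
have h_is_derive z : z \in `]s, c[ -> is_derive z 1 h (derive1 h z).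
  rewrite in_itv /= => /andP[sz _]; rewrite derive1E; apply/derivableP.
  by apply: h_derivable; lra.
have [xi] := MVT sc h_is_derive (h_within_continuous s c t0s).
rewrite in_itv /= => /andP[sxi xic] hcs.
have hxi_lt0 : h xi < 0.
  apply: near_c; rewrite /ball /= ger0_norm ?subr_ge0 ?ltW //.
  by move: sxi; rewrite /s; lra.
exists s; first by rewrite t0s sc.
by rewrite -subr_gt0 hcs mulr_gt0 ?subr_gt0 // derive1_gt0_of_lt0 //; lra.
Qed.

Lemma comparison_ge0 : 0 <= h t0 -> forall t, t0 <= t -> 0 <= h t.
Proof.
move=> h_t0 t1 t0t1; rewrite leNgt; apply/negP => ht1_lt0.
have [c] := EVT_min t0t1 (h_within_continuous t0 t1 (lexx t0)).
rewrite in_itv /= => /andP[t0c ct1] c_min.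
have hc_lt0 : h c < 0.
  by apply: le_lt_trans ht1_lt0; apply: c_min; rewrite in_itv /= t0t1 lexx.
have t0_lt_c : t0 < c.
  by rewrite lt_def t0c andbT; apply/eqP => c_t0; move: hc_lt0; rewrite c_t0 ltNge h_t0.
have [s /andP[t0s sc]] := lt0_not_left_min c t0_lt_c hc_lt0.
by rewrite ltNge c_min // in_itv /= t0s (le_trans (ltW sc) ct1).
Qed.

End Comparison.

Section AVCBFChain.
Variables (R : realType) (n : nat) (b : 'cV[R]_n -> R).
Variables (A : nat -> 'cV[R]_n -> R -> R) (alpha : nat -> R -> R).
Variables (x : R -> 'cV[R]_n) (a : nat -> R -> R).

Local Notation psi := (avcbf_psi b A alpha x a).

Lemma avcbf_psi0_ge0E t : 0 < A 0 (x t) (a 0 t) -> (0 <= psi 0 t) = (0 <= b (x t)).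
Proof. by move=> A_gt0; rewrite /= pmulr_rge0. Qed.

Lemma avcbf_psiS_ge0E i t : 0 < A i.+1 (x t) (a i.+1 t) ->
  (0 <= psi i.+1 t) = (0 <= derive1 (psi i) t + alpha i.+1 (psi i t)).
Proof. by move=> A_gt0; rewrite /= pmulr_rge0. Qed.

Lemma avcbf_psi_ge0_pred i :
  ext_classK (alpha i.+1) ->
  (forall t, 0 <= t -> derivable (psi i) t 1) ->
  (forall t, 0 <= t -> 0 < A i.+1 (x t) (a i.+1 t)) ->
  0 <= psi i 0 ->
  (forall t, 0 <= t -> 0 <= psi i.+1 t) ->
  forall t, 0 <= t -> 0 <= psi i t.
Proof.
move=> alphaK psi_derivable A_gt0 psi_0 psiS_ge0.
apply: (@comparison_ge0 _ _ (alpha i.+1) 0) => // [s|t t_ge0].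
  exact: ext_classK_lt0.
by rewrite -avcbf_psiS_ge0E ?A_gt0 ?psiS_ge0.
Qed.

Lemma avcbf_psi_ge0 ma :
  (forall j, (1 <= j <= ma)%N -> ext_classK (alpha j)) ->
  (forall i t, (i < ma)%N -> 0 <= t -> derivable (psi i) t 1) ->
  (forall k t, (k < ma)%N -> 0 <= t -> 0 < A k (x t) (a k t)) ->
  (forall i, (i < ma)%N -> 0 <= psi i 0) ->
  (forall t, 0 <= t -> 0 <= psi ma.-1 t) ->
  forall i t, (i < ma)%N -> 0 <= t -> 0 <= psi i t.
Proof.
move=> alphaK psi_derivable A_gt0 psi_0 psi_last_ge0.
suff psi_ge0 k i : (i + k)%N = ma.-1 -> forall t, 0 <= t -> 0 <= psi i t.
  by move=> i t i_lt t_ge0; apply: (psi_ge0 (ma.-1 - i)%N) => //; lia.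
elim: k i => [|k IHk] i ik; first by rewrite addn0 in ik; rewrite ik.
have i_lt : (i.+1 < ma)%N by lia.
apply: avcbf_psi_ge0_pred.
- by apply: alphaK; lia.
- by move=> t; apply: psi_derivable; lia.
- by move=> t; apply: A_gt0.
- by apply: psi_0; lia.
- by apply: IHk; rewrite addSnnS.
Qed.

End AVCBFChain.

Theorem theorem2 (R : realType) (n q ma : nat)
    (f : 'cV[R]_n -> 'cV[R]_n) (g : 'cV[R]_n -> 'M[R]_(n, q))
    (b : 'cV[R]_n -> R) (A : nat -> 'cV[R]_n -> R -> R)
    (alpha : nat -> R -> R)
    (x : R -> 'cV[R]_n) (u : R -> 'cV[R]_q) (a : nat -> R -> R) :
  (1 <= ma)%N ->
  (* class-kappa functions alpha_1..alpha_ma; alpha_j (ma-j)-times differentiable *)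
  (forall j, (1 <= j <= ma)%N -> ext_classK (alpha j)) ->
  (forall j k (s : R), (1 <= j < ma)%N -> (k < ma - j)%N ->
      derivable (derive1n k (alpha j)) s 1) ->
  (* x solves xdot = f(x) + g(x) u on t >= 0 *)
  (forall t : R, 0 <= t -> is_derive t 1 x (f (x t) + g (x t) *m u t)) ->
  (* auxiliary states pi_{k+1} = (a_k, a_k', ..., a_k^(ma-k-1)) evolve as chains
     of integrators driven by nu_{k+1} = a_k^(ma-k) *)
  (forall k j (t : R), (k < ma)%N -> (j < ma - k)%N -> 0 <= t ->
      derivable (derive1n j (a k)) t 1) ->
  (* the psi_i (i < ma) are differentiable along the trajectory *)
  (forall i (t : R), (i < ma)%N -> 0 <= t -> derivable (avcbf_psi b A alpha x a i) t 1) ->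
  (* positive auxiliary functions *)
  (forall k (t : R), (k < ma)%N -> 0 <= t -> 0 < A k (x t) (a k t)) ->
  (* Z(0) in C_0 /\ ... /\ C_{ma-1} *)
  (forall i, (i < ma)%N -> 0 <= avcbf_psi b A alpha x a i 0) ->
  (* AVCBF constraint satisfied along the trajectory *)
  (forall t : R, 0 <= t -> 0 <= avcbf_psi_top b A alpha x a ma t) ->
  (* Z(t) in C_{ma-1} for all t >= 0 *)
  (forall t : R, 0 <= t -> 0 <= avcbf_psi b A alpha x a ma.-1 t) ->
  forall t : R, 0 <= t ->
    (forall i, (i < ma)%N -> 0 <= avcbf_psi b A alpha x a i t) /\ 0 <= b (x t).
Proof.
move=> ma_ge1 alphaK _ _ _ psi_derivable A_gt0 psi_0 _ psi_last_ge0 t t_ge0.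
have psi_ge0 := @avcbf_psi_ge0 _ _ b A alpha x a ma
  alphaK psi_derivable A_gt0 psi_0 psi_last_ge0.
split=> [i i_lt|]; first exact: psi_ge0.
by rewrite -(@avcbf_psi0_ge0E _ _ b A alpha x a) ?psi_ge0 ?A_gt0.
Qed.
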